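(* Let $1\le i,m\le n$. Then $\mathsf{L}^i_n=\langle\mathbf{ŁV}_{n+1},F_{i/n}\rangle$ is maximal with respect to $\mathsf{L}^{i/n}_m=\langle\mathbf{ŁV}_{m+1},F_{i/n}\cap\mathrm{ŁV}_{m+1}\rangle$ if and only if there are a prime number $q$ and an integer $k\ge1$ such that $n=q^k$ and $m=q^{k-1}$.
   Context: $\mathbf{ŁV}_{n+1}=(\{0,\frac1n,\dots,\frac{n-1}n,1\},\neg,\to)$ with $\neg x=1-x$, $x\to y=\min\{1,1-x+y\}$; $\mathbf{ŁV}_{m+1}$ is a subalgebra of $\mathbf{ŁV}_{n+1}$ iff $m\mid n$. $F_{i/n}=\{x\in\mathrm{ŁV}_{n+1}:x\ge i/n\}$. Matrix logic consequence: $\Gamma\vdash\varphi$ iff every evaluation sending $\Gamma$ into the designated set sends $\varphi$ into it. $L_1$ is maximal w.r.t. $L_2$ if ${\vdash_{L_1}}\subsetneq{\vdash_{L_2}}$ and for every formula $\varphi$ with $\vdash_{L_2}\varphi$ but $\nvdash_{L_1}\varphi$, the logic obtained from $L_1$ by adding all substitution instances of $\varphi$ as axioms coincides with $L_2$. *)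

From HB Require Import structures.
From mathcomp Require Import all_boot all_order all_algebra.
Set Implicit Arguments. Unset Strict Implicit. Unset Printing Implicit Defensive.
Import Order.TTheory GRing.Theory Num.Theory.
Local Open Scope ring_scope.

Inductive fm : Type :=
| Var : nat -> fm
| Neg : fm -> fm
| Imp : fm -> fm -> fm.

Fixpoint subst (s : nat -> fm) (f : fm) : fm :=
  match f with
  | Var p => s p
  | Neg a => Neg (subst s a)
  | Imp a b => Imp (subst s a) (subst s b)
  end.

Definition luk_neg (x : rat) : rat := 1 - x.
Definition luk_imp (x y : rat) : rat := Num.min 1 (1 - x + y).

Fixpoint eval (v : nat -> rat) (f : fm) : rat :=
  match f with
  | Var p => v p
  | Neg a => luk_neg (eval v a)
  | Imp a b => luk_imp (eval v a) (eval v b)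
  end.

(* Universe of LV_{n+1} = {0, 1/n, ..., (n-1)/n, 1}. *)
Definition LV (n : nat) (x : rat) : Prop :=
  exists k : nat, (k <= n)%N /\ x = k%:R / n%:R.

Definition logic := (fm -> Prop) -> fm -> Prop.

(* Matrix logic <A, D>, A given by universe predicate (closed under the ops),
   D the designated set. *)
Definition matrix_cons (A D : rat -> Prop) : logic :=
  fun Gamma phi =>
    forall v : nat -> rat, (forall p, A (v p)) ->
      (forall psi, Gamma psi -> D (eval v psi)) -> D (eval v phi).

Definition F (i n : nat) (x : rat) : Prop := LV n x /\ i%:R / n%:R <= x.

Definition L_in (i n : nat) : logic := matrix_cons (LV n) (F i n).

Definition L_inm (i n m : nat) : logic :=
  matrix_cons (LV m) (fun x => F i n x /\ LV m x).

Definition theorem (L : logic) (phi : fm) : Prop := L (fun _ => False) phi.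

Definition add_axiom (L : logic) (phi : fm) : logic :=
  fun Gamma psi => L (fun chi => Gamma chi \/ exists s, chi = subst s phi) psi.

Definition sub_logic (L1 L2 : logic) : Prop :=
  forall Gamma phi, L1 Gamma phi -> L2 Gamma phi.

Definition strict_sub_logic (L1 L2 : logic) : Prop :=
  sub_logic L1 L2 /\ exists Gamma phi, L2 Gamma phi /\ ~ L1 Gamma phi.

Definition same_logic (L1 L2 : logic) : Prop :=
  forall Gamma phi, L1 Gamma phi <-> L2 Gamma phi.

Definition maximal_wrt (L1 L2 : logic) : Prop :=
  strict_sub_logic L1 L2 /\
  forall phi, theorem L2 phi -> ~ theorem L1 phi ->
    same_logic (add_axiom L1 phi) L2.

From mathcomp Require Import all_boot all_order all_algebra.
From mathcomp Require Import ring lra zify.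
From Stdlib Require Import ClassicalEpsilon.
Set Implicit Arguments. Unset Strict Implicit. Unset Printing Implicit Defensive.
Import Order.TTheory GRing.Theory Num.Theory.
Local Open Scope ring_scope.

(* Since 1/d lies in LV_{N+1} exactly when d | N, the formula [inv_test n d] (value 1 at 1/d
   and 0 elsewhere, on every LV_{N+1} with N <= n) separates the logics: the consequence
   {inv_test n d} |- ~ inv_test n d holds over LV_{N+1} iff d does not divide N.  Hence a
   strict inclusion of L^i_n in L^{i/n}_m forces m | n and m < n, and if some proper divisor
   d of n does not divide m, adding ~ inv_test n n to L^i_n does not reach L^{i/n}_m.  When
   every proper divisor of n divides m, n = q^k and m = q^(k-1) for a prime q.  Conversely,
   in that case every element of LV_{n+1} outside LV_{m+1} is j/n with j coprime to n and
   generates the whole algebra, so a valuation satisfying all instances of a non-theorem of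
   L^i_n takes its values in LV_{m+1}. *)

(* Splits the innermost [Num.min]/[Num.max] first, so that every hypothesis it introduces
   is free of min/max and the resulting goals are within reach of [lra]. *)
Ltac case_minmax :=
  repeat match goal with
  | |- context [Num.min ?x ?y] =>
      lazymatch constr:((x, y)) with
      | context [Num.min _ _] => fail | context [Num.max _ _] => fail
      | _ => case: (lerP x y) => ?
      end
  | |- context [Num.max ?x ?y] =>
      lazymatch constr:((x, y)) with
      | context [Num.min _ _] => fail | context [Num.max _ _] => fail
      | _ => case: (lerP x y) => ?
      end
  end.

Lemma gcdn_sub_closed (S : nat -> Prop) a b :
  (forall x y, (y <= x)%N -> S x -> S y -> S (x - y)%N) -> S a -> S b -> S (gcdn a b).
Proof.
move=> subS; have [s] := ubnP (a + b); elim: s a b => // s IH a b ab_lt Sa Sb.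
have [-> | a_gt0] := posnP a; first by rewrite gcd0n.
have [-> | b_gt0] := posnP b; first by rewrite gcdn0.
have [a_le_b | b_lt_a] := leqP a b.
  by rewrite -(subnKC a_le_b) gcdnDl; apply: IH => //; [lia | exact: subS].
rewrite gcdnC -(subnKC (ltnW b_lt_a)) gcdnDl gcdnC.
by apply: IH => //; [lia | exact: subS (ltnW b_lt_a) _ _].
Qed.

Lemma proper_divisors_dvd_prime_power m n :
  (0 < m)%N -> (m %| n)%N -> (m < n)%N ->
  (forall d, (d %| n)%N -> (d < n)%N -> (d %| m)%N) ->
  exists q k, prime q /\ (1 <= k)%N /\ n = (q ^ k)%N /\ m = (q ^ k.-1)%N.
Proof.
move=> m_gt0 m_dvd_n m_lt_n proper_dvd.
have n_gt0 : (0 < n)%N by apply: ltn_trans m_lt_n.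
have n_mr : n = (m * (n %/ m))%N by rewrite mulnC divnK.
move: (n %/ m)%N n_mr => r n_mr.
have r_gt1 : (1 < r)%N by nia.
set q := pdiv r; have q_prime : prime q := pdiv_prime r_gt1.
have q_le_r : (q <= r)%N by rewrite pdiv_leq ?(ltnW r_gt1).
have mq_dvd_n : (m * q %| n)%N by rewrite n_mr dvdn_pmul2l ?pdiv_dvd.
have mq_ndvd_m : ~~ (m * q %| m)%N.
  apply/negP => /(dvdn_leq m_gt0); rewrite -[leqRHS]muln1 leq_pmul2l //.
  by rewrite leqNgt prime_gt1.
have n_mq : n = (m * q)%N.
  suff r_le_q : (r <= q)%N by rewrite n_mr; congr (_ * _)%N; apply/eqP; rewrite eqn_leq r_le_q.
  rewrite -(leq_pmul2l m_gt0) -n_mr leqNgt; apply: contra mq_ndvd_m; exact: proper_dvd.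
have qe_n : (q ^ logn q n)%N = n.
  apply/eqP; apply: contraT => qe_neq_n.
  have qe_lt_n : (q ^ logn q n < n)%N by rewrite ltn_neqAle qe_neq_n dvdn_leq ?pfactor_dvdnn.
  have : (q ^ (logn q n).+1 %| n)%N.
    by rewrite expnSr [X in (_ %| X)%N]n_mq dvdn_mul ?proper_dvd ?pfactor_dvdnn.
  by rewrite pfactor_dvdn // ltnn.
have e_gt0 : (0 < logn q n)%N.
  by rewrite lt0n; apply/eqP => e0; move: qe_n; rewrite e0 expn0; lia.
exists q, (logn q n); split=> //; split=> //; split=> //.
by apply/eqP; rewrite -(eqn_pmul2r (prime_gt0 q_prime)) -expnSr prednK // qe_n n_mq.
Qed.

Lemma natr_neq0 {R : numDomainType} n : (0 < n)%N -> n%:R != 0 :> R.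
Proof. by rewrite pnatr_eq0 -lt0n. Qed.

Lemma LV_ge0_le1 N x : LV N x -> 0 <= x <= 1.
Proof.
case=> k [k_le_N ->]; have [-> | N_gt0] := posnP N; first by rewrite invr0 mulr0 lexx ler01.
by rewrite divr_ge0 ?ler0n //= ler_pdivrMr ?ltr0n // mul1r ler_nat.
Qed.

Lemma LV1 N : (0 < N)%N -> LV N 1.
Proof. by move=> N_gt0; exists N; rewrite leqnn divff ?natr_neq0. Qed.

Lemma LV_neg N x : (0 < N)%N -> LV N x -> LV N (luk_neg x).
Proof.
move=> N_gt0 [k [k_le_N ->]]; exists (N - k)%N; split; first exact: leq_subr.
by rewrite /luk_neg natrB // mulrBl divff ?natr_neq0.
Qed.

Lemma LV_imp N x y : (0 < N)%N -> LV N x -> LV N y -> LV N (luk_imp x y).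
Proof.
move=> N_gt0 [a [a_le_N ->]] [b [b_le_N ->]].
have N_pos : 0 < N%:R^-1 :> rat by rewrite invr_gt0 ltr0n.
have [a_le_b | b_lt_a] := leqP a b.
  have ab : a%:R / N%:R <= b%:R / N%:R :> rat by rewrite ler_pM2r // ler_nat.
  by rewrite /luk_imp min_l; [exact: LV1 | lra].
have ba : b%:R / N%:R <= a%:R / N%:R :> rat by rewrite ler_pM2r // ler_nat ltnW.
exists (N - (a - b))%N; split; first exact: leq_subr.
rewrite /luk_imp min_r; last by lra.
rewrite !natrB ?(ltnW b_lt_a) ?(leq_trans (leq_subr b a)) // !mulrBl.
by rewrite divff ?natr_neq0 //; ring.
Qed.

Lemma LV_eval N v f : (0 < N)%N -> (forall p, LV N (v p)) -> LV N (eval v f).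
Proof.
move=> N_gt0 vN; elim: f => [p | a IHa | a IHa b IHb] /=.
- exact: vN.
- exact: LV_neg.
- exact: LV_imp.
Qed.

Lemma LV_dvd m n x : (0 < n)%N -> (m %| n)%N -> LV m x -> LV n x.
Proof.
move=> n_gt0 /dvdnP[c n_cm] [k [k_le_m ->]].
have /andP[c_gt0 m_gt0] : (0 < c)%N && (0 < m)%N by rewrite -muln_gt0 -n_cm.
exists (c * k)%N; split; first by rewrite n_cm leq_mul2l k_le_m orbT.
by rewrite n_cm !natrM -mulf_div divff ?mul1r ?natr_neq0.
Qed.

Lemma LV_inv_iff N d : (0 < N)%N -> (0 < d)%N -> LV N d%:R^-1 <-> (d %| N)%N.
Proof.
move=> N_gt0 d_gt0; split=> [[k [_ d_inv]] | /dvdnP[k N_kd]].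
  have N_kd : N%:R = k%:R / N%:R * N%:R * d%:R :> rat.
    by rewrite -d_inv mulrAC mulVf ?mul1r ?natr_neq0.
  apply/dvdnP; exists k; apply/eqP.
  by rewrite -(eqr_nat rat) natrM N_kd divfK ?natr_neq0.
have k_gt0 : (0 < k)%N by move: N_gt0; rewrite N_kd muln_gt0 => /andP[].
exists k; split; first by rewrite N_kd leq_pmulr.
by rewrite N_kd natrM invfM mulrA divff ?mul1r ?natr_neq0.
Qed.

Lemma LV_mul_split m q x : (0 < q)%N -> LV (m * q) x ->
  LV m x \/ exists j, ~~ (q %| j)%N /\ (j <= m * q)%N /\ x = j%:R / (m * q)%:R.
Proof.
move=> q_gt0 [j [j_le_mq x_eq]]; have [/dvdnP[k j_kq] | q_ndvd_j] := boolP (q %| j)%N.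
  left; exists k; split; first by rewrite -(leq_pmul2r q_gt0) -j_kq.
  by rewrite x_eq j_kq !natrM -mulf_div divff ?mulr1 ?natr_neq0.
by right; exists j.
Qed.

Definition odot (a b : fm) : fm := Neg (Imp a (Neg b)).

Fixpoint mult (k : nat) (a : fm) : fm :=
  if k is k'.+1 then Imp (Neg (mult k' a)) a else Neg (Imp a a).

Fixpoint pow (k : nat) (a : fm) : fm :=
  if k is k'.+1 then odot (pow k' a) a else Imp a a.

Lemma eval_Neg v a : eval v (Neg a) = luk_neg (eval v a).
Proof. by []. Qed.

Lemma eval_imp_eq1 v a b : (eval v (Imp a b) == 1) = (eval v a <= eval v b).
Proof.
rewrite /= /luk_imp; case: (lerP 1 (1 - eval v a + eval v b)) => h; rewrite ?eqxx.
  by apply/esym; lra.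
by rewrite lt_eqF //; apply/esym/negbTE; rewrite -ltNge; lra.
Qed.

Lemma eval_odot v a b : eval v (odot a b) = Num.max 0 (eval v a + eval v b - 1).
Proof. by rewrite /= /luk_neg /luk_imp; case_minmax; lra. Qed.

Lemma eval_mult v k a : 0 <= eval v a ->
  eval v (mult k a) = Num.min 1 (k%:R * eval v a).
Proof.
move=> x_ge0; elim: k => [|k IH] /=; first by rewrite /luk_neg /luk_imp mul0r; case_minmax; lra.
have kx_ge0 : 0 <= k%:R * eval v a by rewrite mulr_ge0.
by rewrite /luk_neg /luk_imp IH -natr1 mulrDl mul1r; case_minmax; lra.
Qed.

Lemma eval_pow v k a : eval v a <= 1 ->
  eval v (pow k a) = Num.max 0 (1 - k%:R * (1 - eval v a)).
Proof.
move=> x_le1; elim: k => [|k IH]; first by rewrite /= /luk_imp mul0r; case_minmax; lra.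
have kx_ge0 : 0 <= k%:R * (1 - eval v a) by rewrite mulr_ge0 // subr_ge0.
by rewrite eval_odot IH -natr1 mulrDl mul1r; case_minmax; lra.
Qed.

Lemma eval_pow_LV N n v b : (0 < N)%N -> (N <= n)%N -> LV N (eval v b) ->
  eval v (pow n b) = if eval v b == 1 then 1 else 0.
Proof.
move=> N_gt0 N_le_n b_LV; have /andP[_ x_le1] := LV_ge0_le1 b_LV.
move: b_LV => [k [k_le_N x_eq]]; rewrite eval_pow //.
have N_pos : 0 < N%:R :> rat by rewrite ltr0n.
have [k_lt_N | N_le_k] := ltnP k N; last first.
  have k_N : k = N by apply/eqP; rewrite eqn_leq k_le_N.
  by rewrite x_eq k_N divff ?natr_neq0 // eqxx subrr mulr0 subr0; case_minmax; lra.
have x_lt1 : eval v b < 1 by rewrite x_eq ltr_pdivrMr // mul1r ltr_nat.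
have : 1 <= n%:R * (1 - eval v b).
  have gap : 1 - eval v b = (N - k)%:R / N%:R.
    by rewrite x_eq natrB // mulrBl divff ?natr_neq0.
  by rewrite gap mulrA ler_pdivlMr // mul1r -natrM ler_nat; nia.
by rewrite lt_eqF //; case_minmax; lra.
Qed.

(* On LV_{N+1} with N <= n, [inv_test n d] is 1 at valuations sending [Var 0] to 1/d and
   0 elsewhere: [mult d] detects d x >= 1, the implication detects d x <= 1, and
   [pow n] sends every value below 1 to 0. *)
Definition inv_test (n d : nat) : fm :=
  odot (pow n (mult d (Var 0))) (pow n (Imp (Var 0) (Neg (mult d.-1 (Var 0))))).

Lemma eval_mult_eq1 v k a : 0 <= eval v a ->
  (eval v (mult k a) == 1) = (1 <= k%:R * eval v a).
Proof. by move=> x_ge0; rewrite eval_mult //; case: lerP => h; rewrite ?eqxx ?lt_eqF. Qed.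

Lemma eval_imp_neg_mult_eq1 v d a : (0 < d)%N -> 0 <= eval v a ->
  (eval v (Imp a (Neg (mult d.-1 a))) == 1) = (d%:R * eval v a <= 1).
Proof.
case: d => // k _ x_ge0; rewrite eval_imp_eq1 /= /luk_neg eval_mult // -natr1.
have kx_ge0 : 0 <= k%:R * eval v a by rewrite mulr_ge0.
have k_ge0 : 0 <= k%:R :> rat := ler0n _ k.
by rewrite mulrDl mul1r; case_minmax; apply/idP/idP; nra.
Qed.

Lemma eval_inv_test N n d v : (0 < N)%N -> (N <= n)%N -> (0 < d)%N ->
  (forall p, LV N (v p)) -> eval v (inv_test n d) = if v 0%N == d%:R^-1 then 1 else 0.
Proof.
move=> N_gt0 N_le_n d_gt0 vN; have /andP[x_ge0 _] := LV_ge0_le1 (vN 0%N).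
rewrite eval_odot !(eval_pow_LV N_gt0 N_le_n (LV_eval _ N_gt0 vN)).
rewrite eval_mult_eq1 // eval_imp_neg_mult_eq1 //=.
rewrite -(inj_eq (mulfI (natr_neq0 d_gt0))) divff ?natr_neq0 //.
by case: (ltrgtP (d%:R * v 0%N) 1); case_minmax; lra.
Qed.

Lemma eval_inv_test_ndvd N n d v : (0 < N)%N -> (N <= n)%N -> (0 < d)%N ->
  ~~ (d %| N)%N -> (forall p, LV N (v p)) -> eval v (inv_test n d) = 0.
Proof.
move=> N_gt0 N_le_n d_gt0 d_ndvd_N vN; rewrite (eval_inv_test N_gt0 N_le_n d_gt0 vN).
by case: eqP => // v0_inv; move: (vN 0%N); rewrite v0_inv LV_inv_iff // (negbTE d_ndvd_N).
Qed.

Lemma eval_inv_test_inv n d : (0 < d)%N -> (d <= n)%N ->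
  eval (fun=> d%:R^-1) (inv_test n d) = 1.
Proof.
move=> d_gt0 d_le_n; rewrite (eval_inv_test d_gt0 d_le_n d_gt0) ?eqxx // => _.
exact/LV_inv_iff.
Qed.

Lemma eq_eval v1 v2 : v1 =1 v2 -> eval v1 =1 eval v2.
Proof. by move=> v12; elim=> [p | a IHa | a IHa b IHb] /=; rewrite ?IHa ?IHb. Qed.

Lemma eval_subst v s f : eval v (subst s f) = eval (fun p => eval v (s p)) f.
Proof. by elim: f => [p | a IHa | a IHa b IHb] //=; rewrite ?IHa ?IHb. Qed.

(* The numerators of the values definable from j/n are closed under truncated
   subtraction, so they contain gcd(j, n) = 1; multiples of 1/n give the rest. *)
Lemma LV_definable n j v t : (0 < n)%N -> (j <= n)%N -> coprime j n ->
  eval v t = j%:R / n%:R -> forall x, LV n x -> exists u, eval v u = x.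
Proof.
move=> n_gt0 j_le_n coprime_jn eval_t.
have n_pos : 0 < n%:R^-1 :> rat by rewrite invr_gt0 ltr0n.
pose S a := (a <= n)%N /\ exists u, eval v u = a%:R / n%:R.
have S_sub a b : (b <= a)%N -> S a -> S b -> S (a - b)%N.
  move=> b_le_a [a_le_n [ua eval_ua]] [_ [ub eval_ub]].
  split; first exact: leq_trans (leq_subr b a) a_le_n.
  have ba : b%:R / n%:R <= a%:R / n%:R :> rat by rewrite ler_pM2r // ler_nat.
  exists (odot ua (Neg ub)); rewrite eval_odot /= /luk_neg eval_ua eval_ub natrB // mulrBl.
  by case_minmax; lra.
have [_ [u1 eval_u1]] : S 1%N.
  rewrite -(eqP coprime_jn); apply: gcdn_sub_closed S_sub _ _; split=> //.
  - by exists t.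
  - by exists (Imp t t); rewrite divff ?natr_neq0 //= /luk_imp; case_minmax; lra.
move=> _ [k [k_le_n ->]]; exists (mult k u1).
rewrite eval_mult eval_u1 ?divr_ge0 ?ler0n // mul1r min_r //.
by rewrite ler_pdivrMr ?ltr0n // mul1r ler_nat.
Qed.

Lemma LV_valuation_subst n j v p : (0 < n)%N -> (j <= n)%N -> coprime j n ->
  v p = j%:R / n%:R -> forall w, (forall p, LV n (w p)) ->
  exists s, forall f, eval w f = eval v (subst s f).
Proof.
move=> n_gt0 j_le_n coprime_jn vp w wn.
have [s ws] := choice (fun q u => eval v u = w q)
  (fun q => LV_definable (t := Var p) n_gt0 j_le_n coprime_jn vp (wn q)).
by exists s => f; rewrite eval_subst; apply: eq_eval => q; rewrite ws.
Qed.

Section InvTestMatrix.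
Variables (n N : nat) (D : rat -> Prop).
Hypotheses (N_gt0 : (0 < N)%N) (N_le_n : (N <= n)%N) (D1 : D 1) (D0 : ~ D 0).

Let LV_inv d : (d %| N)%N -> LV N d%:R^-1.
Proof. by move=> d_dvd_N; apply/LV_inv_iff => //; exact: dvdn_gt0 d_dvd_N. Qed.

Let le_n_of_dvd d : (d %| N)%N -> (d <= n)%N.
Proof. by move=> d_dvd_N; exact: leq_trans (dvdn_leq N_gt0 d_dvd_N) N_le_n. Qed.

Lemma matrix_theorem_neg_inv_test d : (0 < d)%N ->
  theorem (matrix_cons (LV N) D) (Neg (inv_test n d)) <-> ~~ (d %| N)%N.
Proof.
move=> d_gt0; split=> [thm | d_ndvd_N v vN _].
  apply/negP => d_dvd_N; apply: D0.
  have := thm (fun=> d%:R^-1) (fun=> LV_inv d_dvd_N) (fun _ => False_ind _).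
  by rewrite eval_Neg eval_inv_test_inv ?le_n_of_dvd // /luk_neg subrr.
by rewrite eval_Neg (eval_inv_test_ndvd N_gt0 N_le_n d_gt0 d_ndvd_N vN) /luk_neg subr0.
Qed.

Lemma matrix_entails_inv_test d : (0 < d)%N ->
  matrix_cons (LV N) D (eq (inv_test n d)) (Neg (inv_test n d)) <-> ~~ (d %| N)%N.
Proof.
move=> d_gt0; split=> [ent | d_ndvd_N v vN hyp].
  apply/negP => d_dvd_N; apply: D0.
  have := ent (fun=> d%:R^-1) (fun=> LV_inv d_dvd_N).
  rewrite eval_Neg eval_inv_test_inv ?le_n_of_dvd // /luk_neg subrr; apply=> _ <-.
  by rewrite eval_inv_test_inv ?le_n_of_dvd.
by case: D0; rewrite -(eval_inv_test_ndvd N_gt0 N_le_n d_gt0 d_ndvd_N vN); exact: hyp.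
Qed.

Lemma add_axiom_neg_inv_test d e : (d %| N)%N -> (0 < e)%N -> ~~ (e %| d)%N ->
  ~ add_axiom (matrix_cons (LV N) D) (Neg (inv_test n e))
      (eq (inv_test n d)) (Neg (inv_test n d)).
Proof.
move=> d_dvd_N e_gt0 e_ndvd_d ent; apply: D0.
have d_gt0 := dvdn_gt0 N_gt0 d_dvd_N; have d_le_n := le_n_of_dvd d_dvd_N.
have := ent (fun=> d%:R^-1) (fun=> LV_inv d_dvd_N).
rewrite eval_Neg eval_inv_test_inv // /luk_neg subrr; apply=> _ [<- | [s ->]].
  by rewrite eval_inv_test_inv.
rewrite eval_subst eval_Neg (eval_inv_test_ndvd d_gt0 d_le_n e_gt0 e_ndvd_d) ?subr0 //.
by move=> p; apply: LV_eval => // _; exact/LV_inv_iff.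
Qed.

End InvTestMatrix.

Section Logics.
Variables i n : nat.
Hypotheses (i_gt0 : (0 < i)%N) (i_le_n : (i <= n)%N).

Let n_gt0 : (0 < n)%N := leq_trans i_gt0 i_le_n.

Lemma F1 : F i n 1.
Proof. by split; [exact: LV1 | rewrite ler_pdivrMr ?ltr0n // mul1r ler_nat]. Qed.

Lemma F0 : ~ F i n 0.
Proof. by case=> _; rewrite ler_pdivrMr ?ltr0n // mul0r lern0; apply/negP; rewrite -lt0n. Qed.

Lemma L_in_entails_inv_test d : (0 < d)%N ->
  L_in i n (eq (inv_test n d)) (Neg (inv_test n d)) <-> ~~ (d %| n)%N.
Proof. exact: matrix_entails_inv_test n_gt0 (leqnn n) F1 F0 d. Qed.

Lemma L_inm_entails_inv_test m d : (0 < m)%N -> (m <= n)%N -> (0 < d)%N ->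
  L_inm i n m (eq (inv_test n d)) (Neg (inv_test n d)) <-> ~~ (d %| m)%N.
Proof.
move=> m_gt0 m_le_n; apply: (matrix_entails_inv_test m_gt0 m_le_n (conj F1 (LV1 m_gt0))).
by case=> /F0.
Qed.

Lemma L_in_theorem_neg_inv_test d : (0 < d)%N ->
  theorem (L_in i n) (Neg (inv_test n d)) <-> ~~ (d %| n)%N.
Proof. exact: matrix_theorem_neg_inv_test n_gt0 (leqnn n) F1 F0 d. Qed.

Lemma L_inm_theorem_neg_inv_test m d : (0 < m)%N -> (m <= n)%N -> (0 < d)%N ->
  theorem (L_inm i n m) (Neg (inv_test n d)) <-> ~~ (d %| m)%N.
Proof.
move=> m_gt0 m_le_n; apply: (matrix_theorem_neg_inv_test m_gt0 m_le_n (conj F1 (LV1 m_gt0))).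
by case=> /F0.
Qed.

Lemma L_in_sub_L_inm m : (m %| n)%N -> sub_logic (L_in i n) (L_inm i n m).
Proof.
move=> m_dvd_n Gamma phi ent v vm hyp; have m_gt0 := dvdn_gt0 n_gt0 m_dvd_n.
split; last exact: LV_eval.
by apply: ent => [p | psi /hyp []//]; exact: LV_dvd (vm p).
Qed.

Lemma dvdn_of_L_in_sub_L_inm m : (0 < m)%N -> (m <= n)%N ->
  sub_logic (L_in i n) (L_inm i n m) -> (m %| n)%N.
Proof.
move=> m_gt0 m_le_n sub; apply: contraT => m_ndvd_n.
have := sub _ _ (proj2 (L_in_entails_inv_test m_gt0) m_ndvd_n).
by move/(L_inm_entails_inv_test m_gt0 m_le_n m_gt0); rewrite dvdnn.
Qed.

Lemma L_inm_n_sub_L_in : sub_logic (L_inm i n n) (L_in i n).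
Proof.
move=> Gamma phi ent v vn hyp; apply: proj1 (ent v vn _) => psi /hyp F_psi.
by split=> //; exact: LV_eval.
Qed.

Lemma strict_sub_L_in_L_inm m : (0 < m)%N -> (m %| n)%N -> (m < n)%N ->
  strict_sub_logic (L_in i n) (L_inm i n m).
Proof.
move=> m_gt0 m_dvd_n m_lt_n; split; first exact: L_in_sub_L_inm.
exists (eq (inv_test n n)), (Neg (inv_test n n)); split.
  by apply/(L_inm_entails_inv_test m_gt0 (ltnW m_lt_n) n_gt0); rewrite gtnNdvd.
by move/(L_in_entails_inv_test n_gt0); rewrite dvdnn.
Qed.

Lemma maximal_proper_divisor_dvd m : (0 < m)%N -> (m < n)%N ->
  maximal_wrt (L_in i n) (L_inm i n m) ->
  forall d, (d %| n)%N -> (d < n)%N -> (d %| m)%N.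
Proof.
move=> m_gt0 m_lt_n [_ maximal] d d_dvd_n d_lt_n; apply/negPn/negP => d_ndvd_m.
have d_gt0 := dvdn_gt0 n_gt0 d_dvd_n.
have neg_thm : theorem (L_inm i n m) (Neg (inv_test n n)).
  by apply/(L_inm_theorem_neg_inv_test m_gt0 (ltnW m_lt_n) n_gt0); rewrite gtnNdvd.
have neg_nthm : ~ theorem (L_in i n) (Neg (inv_test n n)).
  by move/(L_in_theorem_neg_inv_test n_gt0); rewrite dvdnn.
apply: (add_axiom_neg_inv_test (D := F i n) n_gt0 (leqnn n) F1 F0 d_dvd_n n_gt0).
  by rewrite gtnNdvd.
apply/(maximal _ neg_thm neg_nthm).
exact/(L_inm_entails_inv_test m_gt0 (ltnW m_lt_n) d_gt0).
Qed.

Lemma add_axiom_sub_L_inm m phi : (m %| n)%N -> theorem (L_inm i n m) phi ->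
  sub_logic (add_axiom (L_in i n) phi) (L_inm i n m).
Proof.
move=> m_dvd_n thm Gamma psi ent v vm hyp; have m_gt0 := dvdn_gt0 n_gt0 m_dvd_n.
split; last exact: LV_eval.
apply: ent => [p | chi [/hyp [] // | [s ->]]]; first exact: LV_dvd (vm p).
rewrite eval_subst; apply: proj1 (thm _ _ (fun _ => False_ind _)) => p.
exact: LV_eval.
Qed.

(* A value j/n with q not dividing j generates all of LV_{n+1}, so a valuation taking it and
   satisfying every instance of phi would make phi an L^i_n theorem. *)
Lemma L_inm_sub_add_axiom q k phi : prime q -> (0 < k)%N -> n = (q ^ k)%N ->
  ~ theorem (L_in i n) phi -> sub_logic (L_inm i n (q ^ k.-1)) (add_axiom (L_in i n) phi).
Proof.
move=> q_prime k_gt0 n_qk nthm Gamma psi ent v vn hyp.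
have n_mq : n = (q ^ k.-1 * q)%N by rewrite n_qk -expnSr prednK.
have vm p : LV (q ^ k.-1) (v p).
  have := vn p; rewrite n_mq => /(LV_mul_split (prime_gt0 q_prime)) [// | [j [q_ndvd_j]]].
  rewrite -n_mq => -[j_le_n vp]; case: nthm => w wn _.
  have coprime_jn : coprime j n by rewrite n_qk coprimeXr // coprime_sym prime_coprime.
  have [s ->] := LV_valuation_subst n_gt0 j_le_n coprime_jn vp wn.
  by apply: hyp; right; exists s.
have m_gt0 : (0 < q ^ k.-1)%N by rewrite expn_gt0 prime_gt0.
apply: proj1 (ent v vm _) => chi Gamma_chi; split; last exact: LV_eval.
by apply: hyp; left.
Qed.

End Logics.

Theorem corollary5p3 (i m n : nat) :
  (1 <= i <= n)%N -> (1 <= m <= n)%N ->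
  (maximal_wrt (L_in i n) (L_inm i n m) <->
   exists q k : nat, prime q /\ (1 <= k)%N /\ n = (q ^ k)%N /\ m = (q ^ k.-1)%N).
Proof.
move=> /andP[i_gt0 i_le_n] /andP[m_gt0 m_le_n]; split.
  move=> maximal; have [[sub [Gamma [phi [ent nent]]]] _] := maximal.
  have m_dvd_n := dvdn_of_L_in_sub_L_inm i_gt0 i_le_n m_gt0 m_le_n sub.
  have m_lt_n : (m < n)%N.
    rewrite ltn_neqAle m_le_n andbT; apply/eqP => m_n; rewrite m_n in ent.
    exact/nent/L_inm_n_sub_L_in.
  apply: proper_divisors_dvd_prime_power => //.
  exact: (maximal_proper_divisor_dvd i_gt0 i_le_n m_gt0 m_lt_n maximal).
move=> [q [k [q_prime [k_gt0 [n_qk m_qk]]]]].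
have m_dvd_n : (m %| n)%N by rewrite n_qk m_qk -(prednK k_gt0) expnS dvdn_mull.
have m_lt_n : (m < n)%N.
  by rewrite n_qk m_qk -(prednK k_gt0) expnS ltn_Pmull ?prime_gt1 ?expn_gt0 ?prime_gt0.
split; first exact: strict_sub_L_in_L_inm.
move=> phi thm nthm Gamma psi; split.
  exact: add_axiom_sub_L_inm.
by rewrite m_qk; exact: L_inm_sub_add_axiom.
Qed.
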